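(* Let $R$ be a domain satisfying the ascending chain condition for principal ideals, and let $a\in R$ be a non-zero element with $a\notin R^{\ast}$. Then: (i) there exist $b\in R$ and $c\in\operatorname{Sqf} R$ such that $a=b^2c$; (ii) there exist $n\geqslant 0$ and $s_0,s_1,\dots,s_n\in\operatorname{Sqf} R$ such that $a=s_n^{2^n}s_{n-1}^{2^{n-1}}\cdots s_1^2s_0$; (iii) there exist $n\geqslant 1$, $s_1,\dots,s_n\in(\operatorname{Sqf} R)\setminus R^{\ast}$, integers $0\leqslant k_1<k_2<\dots<k_n$, and $c\in R^{\ast}$ such that $a=c\,s_n^{2^{k_n}}s_{n-1}^{2^{k_{n-1}}}\cdots s_1^{2^{k_1}}$.
   Context: A domain is a commutative ring with identity without zero divisors. $R^{\ast}$ denotes the set of invertible elements of $R$. An element $a\in R$ is square-free if it cannot be written as $a=b^2c$ with $b\in R\setminus R^{\ast}$ and $c\in R$; $\operatorname{Sqf} R$ denotes the set of square-free elements of $R$. *)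

From mathcomp Require Import all_boot all_algebra.
Set Implicit Arguments. Unset Strict Implicit. Unset Printing Implicit Defensive.
Import GRing.Theory.
Local Open Scope ring_scope.

Definition rdvd (R : comRingType) (x y : R) : Prop := exists c : R, y = x * c.

Definition ACCP (R : comRingType) : Prop :=
  forall f : nat -> R, (forall n, rdvd (f n.+1) (f n)) ->
    exists N, forall n, (N <= n)%N -> rdvd (f n) (f N) /\ rdvd (f N) (f n).

Definition sqf (R : comUnitRingType) (a : R) : Prop :=
  ~ exists b c : R, b \isn't a GRing.unit /\ a = b ^+ 2 * c.

(** ACCP says exactly that strict divisibility is well founded, which yields an
    induction principle on non-zero elements.
    (i) If [a] is not square-free then [a = b^2 c] with [b] a non-unit, so [c] is
    a proper divisor of [a]; apply induction to [c].
    (ii) If [a] is not a unit, write [a = b^2 c] as in (i); then [b] is a proper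
    divisor of [a], and squaring a decomposition of [b] doubles its exponents.
    (iii) Collect the unit factors of the decomposition (ii) into [c]. *)

From mathcomp Require Import all_boot all_algebra.
From Stdlib Require Import Classical ClassicalEpsilon.
Import GRing.Theory.
Local Open Scope ring_scope.

Definition proper_rdvd {R : comNzRingType} (y x : R) : Prop :=
  rdvd y x /\ ~ rdvd x y.

Lemma ACCP_wf {R : comNzRingType} : ACCP R -> well_founded (@proper_rdvd R).
Proof.
move=> hacc x0; apply: NNPP => nacc_x0.
pose Acc_pdvd := Acc (@proper_rdvd R).
have step z : exists y, ~ Acc_pdvd z -> proper_rdvd y z /\ ~ Acc_pdvd y.
  case: (classic (Acc_pdvd z)) => [acc_z|nacc_z]; first by exists z.
  have /not_all_ex_not[y] : ~ forall y, proper_rdvd y z -> Acc_pdvd y.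
    by move=> h; apply: nacc_z; constructor.
  by move=> /(imply_to_and (proper_rdvd y z))[yz nacc_y]; exists y.
have [g gP] := ClassicalEpsilon.choice _ step.
pose f n := iter n g x0.
have nacc_f n : ~ Acc_pdvd (f n) by elim: n => //= n IH; case: (gP _ IH).
have f_dvd n : rdvd (f n.+1) (f n) by case: (gP _ (nacc_f n)) => -[].
have [N /(_ N.+1 (leqnSn N))[_ fN_dvd]] := hacc f f_dvd.
have [[_ fN_ndvd] _] := gP _ (nacc_f N).
exact: fN_ndvd fN_dvd.
Qed.

Lemma proper_rdvd_mulr {R : idomainType} (y z : R) :
  y * z != 0 -> z \isn't a GRing.unit -> proper_rdvd y (y * z).
Proof.
move=> yz0 /negP zNU; split=> [|[w yzw]]; first by exists z.
have y0 : y != 0 by apply: contraNneq yz0 => ->; rewrite mul0r.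
apply: zNU; apply/unitrPr; exists w.
by apply: (mulfI y0); rewrite mulrA -yzw mulr1.
Qed.

Lemma sqf_unit {R : comUnitRingType} (u : R) : u \is a GRing.unit -> sqf u.
Proof.
move=> uU [b [c [/negP bNU eu]]]; apply: bNU.
by move: uU; rewrite eu unitrM unitrX_pos // => /andP[].
Qed.

Lemma prod_split_units {R : comUnitRingType} (n : nat) (s : nat -> R) (e : nat -> nat) :
  exists (m : nat) (k : nat -> nat) (c : R),
    [/\ c \is a GRing.unit,
        forall j, (1 <= j <= m)%N -> (k j < n)%N /\ s (k j) \isn't a GRing.unit,
        forall j, (1 <= j < m)%N -> (k j < k j.+1)%N &
        \prod_(i < n) s i ^+ e i = c * \prod_(1 <= j < m.+1) s (k j) ^+ e (k j)].
Proof.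
pose ks := [seq i <- iota 0 n | s i \isn't a GRing.unit].
have ks_sorted : sorted ltn ks := sorted_filter ltn_trans _ (iota_ltn_sorted 0 n).
exists (size ks), (fun j => nth 0%N ks j.-1),
  (\prod_(i < n | s i \is a GRing.unit) s i ^+ e i); split.
- by apply: unitr_prod => i iU; rewrite unitrX.
- move=> [|j] // /andP[_ jm]; have : nth 0%N ks j \in ks by apply: mem_nth.
  by rewrite mem_filter mem_iota => /andP[-> /andP[_ ->]].
- move=> [|j] // /andP[_ jm].
  by apply: (sorted_ltn_nth ltn_trans 0%N ks_sorted); rewrite ?inE // ltnW.
- rewrite (bigID (fun i : 'I_n => s i \is a GRing.unit)) /=; congr (_ * _).
  pose F i := s i ^+ e i.
  rewrite big_add1 /= -(big_nth 0%N xpredT F) big_filter.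
  by rewrite -(big_mkord (fun i => s i \isn't a GRing.unit) F) /index_iota subn0.
Qed.

Section ACCPDecomposition.

Variables (R : idomainType) (hacc : ACCP R).

Lemma exists_sqr_mul_sqf (x : R) : x != 0 -> exists b c : R, sqf c /\ x = b ^+ 2 * c.
Proof.
elim/(well_founded_ind (ACCP_wf hacc)): x => x IH x0.
case: (classic (sqf x)) => [x_sqf|/NNPP[b [c [bNU ex]]]].
  by exists 1, x; rewrite expr1n mul1r.
have c_pdvd : proper_rdvd c x.
  by rewrite ex mulrC; apply: proper_rdvd_mulr; rewrite ?unitrX_pos // mulrC -ex.
have c0 : c != 0 by apply: contraNneq x0 => c0; rewrite ex c0 mulr0.
have [b' [c' [c'_sqf ec]]] := IH c c_pdvd c0.
by exists (b * b'), c'; rewrite ex ec mulrA -exprMn.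
Qed.

Lemma exists_pow2_prod_sqf (x : R) : x != 0 ->
  exists (n : nat) (s : nat -> R),
    (forall i, (i <= n)%N -> sqf (s i)) /\ x = \prod_(i < n.+1) s i ^+ (2 ^ i).
Proof.
elim/(well_founded_ind (ACCP_wf hacc)): x => x IH x0.
have [xU|xNU] := boolP (x \is a GRing.unit).
  exists 0%N, (fun=> x); split=> [i _|]; first exact: sqf_unit.
  by rewrite big_ord1 expr1.
have [b [c [c_sqf ex]]] := exists_sqr_mul_sqf x x0.
have b_pdvd : proper_rdvd b x.
  have ex' : x = b * (b * c) by rewrite ex mulrA.
  rewrite ex'; apply: proper_rdvd_mulr; rewrite -?ex' //.
  by apply: contra xNU; rewrite ex !unitrM => /andP[-> ->].
have b0 : b != 0 by apply: contraNneq x0 => b0; rewrite ex b0 expr0n mul0r.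
have [n [s [s_sqf eb]]] := IH b b_pdvd b0.
exists n.+1, (fun i => if i is j.+1 then s j else c); split=> [[|i] //|].
  exact: s_sqf.
rewrite big_ord_recl expr1 ex eb -prodrXl mulrC; congr (_ * _).
by apply: eq_bigr => i _; rewrite expnS mulnC exprM.
Qed.

End ACCPDecomposition.

Theorem proposition1 (R : idomainType) (hacc : ACCP R) (a : R)
  (ha0 : a != 0) (hau : a \isn't a GRing.unit) :
  (exists b c : R, sqf c /\ a = b ^+ 2 * c)
  /\
  (exists (n : nat) (s : nat -> R),
     (forall i, (i <= n)%N -> sqf (s i)) /\
     a = \prod_(i < n.+1) s i ^+ (2 ^ i))
  /\
  (exists (n : nat) (s : nat -> R) (k : nat -> nat) (c : R),
     (1 <= n)%N /\
     (forall i, (1 <= i <= n)%N -> sqf (s i) /\ s i \isn't a GRing.unit) /\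
     (forall i, (1 <= i < n)%N -> (k i < k i.+1)%N) /\
     c \is a GRing.unit /\
     a = c * \prod_(1 <= i < n.+1) s i ^+ (2 ^ k i)).
Proof.
have [n [s [s_sqf ea]]] := exists_pow2_prod_sqf _ hacc _ ha0.
split; first exact: exists_sqr_mul_sqf.
split; first by exists n, s.
have [m [k [c [cU k_nunit k_incr ec]]]] := prod_split_units n.+1 s (fun i => (2 ^ i)%N).
exists m, (fun j => s (k j)), k, c; split; last split=> //; last by rewrite ea.
- by case: m {k_nunit k_incr} ec => // ec; move: hau; rewrite ea ec big_geq // mulr1 cU.
- by move=> j /k_nunit[kj kjNU]; split=> //; apply: s_sqf.
Qed.
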